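(* Let $\Sigma_0=(A_0,B_0,C_0,D;\mathcal X_0,\mathcal U,\mathcal Y;\kappa)$ and $\Sigma=(A,B,C,D;\mathcal X,\mathcal U,\mathcal Y;\kappa)$ be passive realizations of $\theta\in\mathbf S_\kappa(\mathcal U,\mathcal Y)$ (both with state spaces of negative index $\kappa$) such that $\Sigma_0$ is optimal. If for all $z,w$ in a sufficiently small symmetric neighbourhood $\Omega$ of the origin $$B^*(I-\bar wA^* )^{-1}(I-zA)^{-1}B=B_0^*(I-\bar wA_0^* )^{-1}(I-zA_0)^{-1}B_0,$$ then $\Sigma$ is optimal.
   Context: Standing conventions. All spaces are separable Pontryagin spaces; adjoints and contractivity are with respect to the indefinite inner products. $E_{\mathcal H}(h)=\langle h,h\rangle_{\mathcal H}$. A system $\Sigma=(A,B,C,D;\mathcal X,\mathcal U,\mathcal Y;\kappa)$: state space $\mathcal X$ with negative index $\kappa$, $\mathcal U,\mathcal Y$ with the same negative index, bounded $T_\Sigma=\begin{pmatrix}A&B\\C&D\end{pmatrix}:\mathcal X\oplus\mathcal U\to\mathcal X\oplus\mathcal Y$; passive if $T_\Sigma$ is a contraction ($\langle Tx,Tx\rangle\le\langle x,x\rangle$). Transfer function $D+zC(I-zA)^{-1}B$; realization of $\theta$ if equal to $\theta$ near $0$. $\mathbf S_\kappa(\mathcal U,\mathcal Y)$: $\mathcal L(\mathcal U,\mathcal Y)$-valued functions holomorphic near $0$ whose kernel $\frac{I-S(z)S(w)^*}{1-z\bar w}$ has exactly $\kappa$ negative squares. A passive realization of $\theta\in\mathbf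 S_\kappa(\mathcal U,\mathcal Y)$ is $\kappa$-admissible if its state space has negative index $\kappa$. Optimal: a $\kappa$-admissible passive realization $\Sigma$ of $\theta$ such that for every $\kappa$-admissible passive realization $\Sigma'=(A',B',C',D;\mathcal X',\mathcal U,\mathcal Y;\kappa)$ of $\theta$, $E_{\mathcal X}(\sum_{k=0}^nA^kBu_k)\le E_{\mathcal X'}(\sum_{k=0}^nA'^kB'u_k)$ for all $n\in\mathbb N_0$, $u_k\in\mathcal U$. *)

From HB Require Import structures.
From mathcomp Require Import all_boot all_order all_algebra.
From mathcomp Require Import reals.
From mathcomp Require Import complex.
From Stdlib Require Import ClassicalEpsilon.
Set Implicit Arguments. Unset Strict Implicit. Unset Printing Implicit Defensive.
Import Order.TTheory GRing.Theory Num.Theory.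
Local Open Scope ring_scope.
Local Open Scope complex_scope.

Section Pontryagin.
Variable R : realType.
Local Notation C := (R[i]).

(** squared norm induced by a fundamental decomposition: Pm is the projection
    onto the negative part X_-, id - Pm the projection onto X_+ *)
Definition jnsq (V : lmodType C) (ip : V -> V -> C) (Pm : V -> V) (x : V) : C :=
  ip (x - Pm x) (x - Pm x) - ip (Pm x) (Pm x).

Definition jcomplete (V : lmodType C) (ip : V -> V -> C) (Pm : V -> V) : Prop :=
  forall s : nat -> V,
    (forall eps : C, 0 < eps -> exists N, forall m n, (N <= m)%N -> (N <= n)%N ->
        jnsq ip Pm (s m - s n) < eps) ->
    exists x, forall eps : C, 0 < eps -> exists N, forall n, (N <= n)%N ->
        jnsq ip Pm (s n - x) < eps.

Definition jseparable (V : lmodType C) (ip : V -> V -> C) (Pm : V -> V) : Prop :=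
  exists d : nat -> V, forall x eps, 0 < eps -> exists n, jnsq ip Pm (x - d n) < eps.

(** A separable Pontryagin space with negative index [pkappa]: a complex vector
    space with a hermitian form and a fundamental decomposition
    X = X_+ [+] X_- (orthogonal), X_+ positive definite, X_- negative definite of
    dimension pkappa, complete (both parts are Hilbert spaces) and separable. *)
Record pspace := PSpace {
  pcar : lmodType C;
  pip : pcar -> pcar -> C;
  pPm : pcar -> pcar;
  pkappa : nat;
  pip_linl : forall a x y z, pip (a *: x + y) z = a * pip x z + pip y z;
  pip_herm : forall x y, pip x y = (pip y x)^*;
  pPm_lin : forall a x y, pPm (a *: x + y) = a *: pPm x + pPm y;
  pPm_idem : forall x, pPm (pPm x) = pPm x;
  pPm_orth : forall x y, pip (pPm x) (y - pPm y) = 0;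
  pneg_def : forall x, pPm x = x -> x != 0 -> pip x x < 0;
  ppos_def : forall x, pPm x = 0 -> x != 0 -> 0 < pip x x;
  pneg_dim : exists e : 'I_pkappa -> pcar,
      (forall l, pPm (e l) = e l) /\
      (forall x, pPm x = x -> exists a : 'I_pkappa -> C, x = \sum_l a l *: e l) /\
      (forall a : 'I_pkappa -> C, \sum_l a l *: e l = 0 -> forall l, a l = 0);
  pcomplete : jcomplete pip pPm;
  pseparable : jseparable pip pPm
}.
Coercion pcar : pspace >-> lmodType.

Definition energy (X : pspace) (x : X) : C := pip x x.
Definition pnsq (X : pspace) (x : X) : C := jnsq (@pip X) (@pPm X) x.

Definition is_linear (X Y : pspace) (f : X -> Y) : Prop :=
  forall a x y, f (a *: x + y) = a *: f x + f y.
Definition is_bounded (X Y : pspace) (f : X -> Y) : Prop :=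
  exists M : C, forall x, pnsq (f x) <= M * pnsq x.
Definition bounded_op (X Y : pspace) (f : X -> Y) : Prop :=
  is_linear f /\ is_bounded f.

Definition adj (X Y : pspace) (f : X -> Y) : Y -> X :=
  epsilon (inhabits (fun _ => 0))
    (fun g : Y -> X => forall x y, pip (f x) y = pip x (g y)).

Definition opinv (X : pspace) (f : X -> X) : X -> X :=
  epsilon (inhabits (fun x => x))
    (fun g : X -> X => (forall x, g (f x) = x) /\ (forall x, f (g x) = x)).

Definition IminusZ (X : pspace) (z : C) (T : X -> X) : X -> X :=
  fun x => x - z *: T x.

Definition transfer (X U Y : pspace) (A : X -> X) (B : U -> X) (Cc : X -> Y)
  (D : U -> Y) (z : C) : U -> Y :=
  fun u => D u + z *: Cc (opinv (IminusZ z A) (B u)).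

Definition is_system (X U Y : pspace) (A : X -> X) (B : U -> X) (Cc : X -> Y)
  (D : U -> Y) : Prop :=
  [/\ bounded_op A, bounded_op B, bounded_op Cc, bounded_op D &
      pkappa U = pkappa Y].

(** passive: T_Sigma : X (+) U -> X (+) Y is a contraction *)
Definition passive (X U Y : pspace) A B Cc D : Prop :=
  @is_system X U Y A B Cc D /\
  forall (x : X) (u : U),
    pip (A x + B u) (A x + B u) + pip (Cc x + D u) (Cc x + D u)
      <= pip x x + pip u u.

Definition realizes (X U Y : pspace) A B Cc D (theta : C -> U -> Y) : Prop :=
  exists r : C, 0 < r /\ forall z, `|z| < r -> forall u,
      theta z u = @transfer X U Y A B Cc D z u.

Definition kadmissible (X U Y : pspace) A B Cc D (kappa : nat)
  (theta : C -> U -> Y) : Prop :=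
  [/\ @passive X U Y A B Cc D, realizes A B Cc D theta & pkappa X = kappa].

Definition ctrl_sum (X U : pspace) (A : X -> X) (B : U -> X) (n : nat)
  (u : nat -> U) : X :=
  \sum_(k < n.+1) iter k A (B (u k)).

Definition optimal (X U Y : pspace) A B Cc D (kappa : nat)
  (theta : C -> U -> Y) : Prop :=
  @kadmissible X U Y A B Cc D kappa theta /\
  forall (X' : pspace) (A' : X' -> X') (B' : U -> X') (C' : X' -> Y),
    kadmissible A' B' C' D kappa theta ->
    forall (n : nat) (u : nat -> U),
      energy (ctrl_sum A B n u) <= energy (ctrl_sum A' B' n u).

(** Gram quadratic form of the kernel (I - theta(z) theta(w)^* ) / (1 - z conj w)
    at points z_1..z_n with vectors y_1..y_n:
    q(c) = sum_{i,j} <K(z_j,z_i) c_j y_j, c_i y_i>_Y *)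
Definition schur_gram (U Y : pspace) (theta : C -> U -> Y) (n : nat)
  (z : 'I_n -> C) (y : 'I_n -> Y) (i j : 'I_n) : C :=
  (pip (y j) (y i) - pip (adj (theta (z i)) (y j)) (adj (theta (z j)) (y i)))
    / (1 - z j * (z i)^*).

Definition gram_form (n : nat) (G : 'I_n -> 'I_n -> C) (c : 'I_n -> C) : C :=
  \sum_(i < n) \sum_(j < n) c j * (c i)^* * G i j.

(** the kernel has at least k negative squares on the disc |z| < r: some Gram
    form has a k-dimensional negative definite subspace *)
Definition negsq_ge (U Y : pspace) (theta : C -> U -> Y) (r : C) (k : nat) : Prop :=
  exists (n : nat) (z : 'I_n -> C) (y : 'I_n -> Y) (v : 'I_k -> 'I_n -> C),
    (forall i, `|z i| < r) /\
    forall a : 'I_k -> C, (exists l, a l != 0) ->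
      gram_form (schur_gram theta z y) (fun i => \sum_(l < k) a l * v l i) < 0.

Definition holo_on (U Y : pspace) (theta : C -> U -> Y) (r : C) : Prop :=
  (forall z, `|z| < r -> bounded_op (theta z)) /\
  forall z, `|z| < r -> exists T' : U -> Y,
    forall eps : C, 0 < eps -> exists del : C, 0 < del /\
      forall h, 0 < `|h| < del -> forall u,
        pnsq (h^-1 *: (theta (z + h) u - theta z u) - T' u) <= eps * pnsq u.

Definition in_Skappa (U Y : pspace) (kappa : nat) (theta : C -> U -> Y) : Prop :=
  exists r : C, [/\ 0 < r, r <= 1, holo_on theta r,
    negsq_ge theta r kappa & ~ negsq_ge theta r kappa.+1].

End Pontryagin.

From HB Require Import structures.
From mathcomp Require Import all_boot all_order all_algebra.
From mathcomp Require Import reals.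
From mathcomp Require Import complex.
From mathcomp Require Import ring lra.
From Stdlib Require Import ClassicalEpsilon.
Import Order.TTheory GRing.Theory Num.Theory.
Local Open Scope ring_scope.
Local Open Scope complex_scope.
Set Implicit Arguments. Unset Strict Implicit. Unset Printing Implicit Defensive.

(* The resolvent [opinv (I - z A)] and the adjoint [adj] are defined by choice,
   so one first shows that they exist: for small real [t], [I - t A] is inverted
   by Picard iteration in the Hilbert norm of a fundamental decomposition, and
   adjoints come from a Riesz representation obtained by minimising
   [|x|^2 - 2 Re <f x, y>].  The hypothesis then says that the kernels
   [<(I - s A)^{-1} B v, (I - t A)^{-1} B u>] of the two systems agree for small
   real [s, t].  The expansion [(I - t A)^{-1} = I + t A (I - t A)^{-1}] peels
   off one power of [A] at a time, so all moments [<A^j B v, A^k B u>] agree.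
   These determine the energy of every control sum [sum_k A^k B u_k], so
   optimality passes from the first system to the second. *)

Section ComplexParts.
Variable R : realType.
Implicit Types (t : R) (w v : R[i]).

Lemma ReD w v : complex.Re (w + v) = complex.Re w + complex.Re v.
Proof. by case: w; case: v. Qed.
Lemma ImD w v : complex.Im (w + v) = complex.Im w + complex.Im v.
Proof. by case: w; case: v. Qed.
Lemma ReN w : complex.Re (- w) = - complex.Re w.
Proof. by case: w. Qed.
Lemma ImN w : complex.Im (- w) = - complex.Im w.
Proof. by case: w. Qed.
Lemma ReB w v : complex.Re (w - v) = complex.Re w - complex.Re v.
Proof. by rewrite ReD ReN. Qed.
Lemma ImB w v : complex.Im (w - v) = complex.Im w - complex.Im v.
Proof. by rewrite ImD ImN. Qed.
Lemma ReMrl t w : complex.Re (t%:C * w) = t * complex.Re w.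
Proof. by case: w => a b /=; rewrite mul0r subr0. Qed.
Lemma ImMrl t w : complex.Im (t%:C * w) = t * complex.Im w.
Proof. by case: w => a b /=; rewrite mul0r addr0. Qed.
Lemma ReMrr w t : complex.Re (w * t%:C) = complex.Re w * t.
Proof. by case: w => a b /=; rewrite mulr0 subr0. Qed.
Lemma ReJ w : complex.Re (w^*)%C = complex.Re w.
Proof. by case: w. Qed.
Lemma ImJ w : complex.Im (w^*)%C = - complex.Im w.
Proof. by case: w. Qed.
Lemma ReiM w : complex.Re ('i * w) = - complex.Im w.
Proof. by case: w => a b /=; rewrite !mul0r !mul1r sub0r. Qed.
Lemma complex_eqP w v :
  complex.Re w = complex.Re v -> complex.Im w = complex.Im v -> w = v.
Proof. by case: w => ? ?; case: v => ? ? /= -> ->. Qed.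
Lemma normc_real t : `|t%:C| = `|t|%:C.
Proof. by rewrite normc_def /= expr0n addr0 sqrtr_sqr. Qed.

End ComplexParts.

Section FundamentalNorm.
Variable R : realType.
Local Notation C := (R[i]).
Variable X : pspace R.
Implicit Types (x y z a b : X) (t : R).

Local Notation ip := (@pip R X).
Local Notation P := (@pPm R X).

Lemma ipDl x y z : ip (x + y) z = ip x z + ip y z.
Proof. by have := pip_linl 1 x y z; rewrite scale1r mul1r. Qed.
Lemma ip0l z : ip 0 z = 0.
Proof. by have /eqP := ipDl 0 0 z; rewrite addr0 -subr_eq addrN eq_sym => /eqP. Qed.
Lemma ipZl (c : C) x z : ip (c *: x) z = c * ip x z.
Proof. by have := pip_linl c x 0 z; rewrite addr0 ip0l addr0. Qed.
Lemma ipNl x z : ip (- x) z = - ip x z.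
Proof. by rewrite -scaleN1r ipZl mulN1r. Qed.
Lemma ipBl x y z : ip (x - y) z = ip x z - ip y z.
Proof. by rewrite ipDl ipNl. Qed.
Lemma ipDr x y z : ip z (x + y) = ip z x + ip z y.
Proof. rewrite (pip_herm z (x + y)) (pip_herm z x) (pip_herm z y) ipDl; exact: rmorphD. Qed.
Lemma ipZr (c : C) x z : ip z (c *: x) = (c^*)%C * ip z x.
Proof. rewrite (pip_herm z) (pip_herm z x) ipZl; exact: rmorphM. Qed.
Lemma ipZr_real t x z : ip z (t%:C *: x) = t%:C * ip z x.
Proof. by rewrite ipZr conjc_real. Qed.
Lemma ip0r z : ip z 0 = 0.
Proof. by rewrite pip_herm ip0l conjc0. Qed.
Lemma ipNr x z : ip z (- x) = - ip z x.
Proof. by apply/eqP; rewrite -subr_eq0 opprK -ipDr addNr ip0r. Qed.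
Lemma ipBr x y z : ip z (x - y) = ip z x - ip z y.
Proof. by rewrite ipDr ipNr. Qed.
Lemma ip_suml I (r : seq I) (Q : pred I) (F : I -> X) z :
  ip (\sum_(i <- r | Q i) F i) z = \sum_(i <- r | Q i) ip (F i) z.
Proof. by elim/big_rec2: _ => [|i y1 y2 _ <-]; [exact: ip0l | exact: ipDl]. Qed.
Lemma ip_sumr I (r : seq I) (Q : pred I) (F : I -> X) z :
  ip z (\sum_(i <- r | Q i) F i) = \sum_(i <- r | Q i) ip z (F i).
Proof. by elim/big_rec2: _ => [|i y1 y2 _ <-]; [exact: ip0r | exact: ipDr]. Qed.

Lemma PmD x y : P (x + y) = P x + P y.
Proof. by have := pPm_lin 1 x y; rewrite !scale1r. Qed.
Lemma Pm0 : P 0 = 0.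
Proof. by have /eqP := PmD 0 0; rewrite addr0 -subr_eq addrN eq_sym => /eqP. Qed.
Lemma PmZ (c : C) x : P (c *: x) = c *: P x.
Proof. by have := pPm_lin c x 0; rewrite !addr0 Pm0 addr0. Qed.
Lemma PmB x y : P (x - y) = P x - P y.
Proof. by rewrite PmD -scaleN1r PmZ scaleN1r. Qed.
Lemma Pm_subK x : P (x - P x) = 0.
Proof. by rewrite PmB pPm_idem subrr. Qed.

Lemma ip_Pm_sub x y : ip (y - P y) (P x) = 0.
Proof. by rewrite pip_herm pPm_orth conjc0. Qed.

(* [jdot] is the Hilbert inner product of the fundamental decomposition
   X = X_+ [+] X_-; [jsym] is the fundamental symmetry J = (I - P) - P. *)
Definition jdot x y : C := ip (x - P x) (y - P y) - ip (P x) (P y).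
Definition jnorm2 x : R := complex.Re (jdot x x).
Definition jsym x : X := (x - P x) - P x.

Lemma pnsqE x : pnsq x = jdot x x. Proof. by []. Qed.

Lemma ip_jdot x y : ip x y = jdot x (jsym y).
Proof.
have ex : x = (x - P x) + P x by rewrite subrK.
have ey : y = (y - P y) + P y by rewrite subrK.
rewrite /jdot /jsym PmB Pm_subK sub0r pPm_idem.
have -> : y - P y - P y - - P y = y - P y by rewrite opprK subrK.
rewrite ipNr {1}ex {1}ey ipDl (ipDr _ _ (x - P x)) (ipDr _ _ (P x)).
by rewrite pPm_orth ip_Pm_sub; ring.
Qed.

Lemma Pm_jsym x : P (jsym x) = - P x.
Proof. by rewrite /jsym PmB Pm_subK pPm_idem sub0r. Qed.
Lemma jsymK x : jsym (jsym x) = x.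
Proof. by rewrite {1}/jsym Pm_jsym /jsym !opprK !subrK. Qed.

Lemma jdotDl x y z : jdot (x + y) z = jdot x z + jdot y z.
Proof.
rewrite /jdot PmD.
have -> : x + y - (P x + P y) = (x - P x) + (y - P y) by rewrite opprD addrACA.
by rewrite !ipDl; ring.
Qed.
Lemma jdotZl (c : C) x z : jdot (c *: x) z = c * jdot x z.
Proof. by rewrite /jdot PmZ -scalerBr !ipZl; ring. Qed.
Lemma jdot_herm x y : jdot x y = (jdot y x)^*.
Proof. by rewrite /jdot (pip_herm (x - P x)) (pip_herm (P x)); exact/esym/rmorphB. Qed.
Lemma jdotDr x y z : jdot z (x + y) = jdot z x + jdot z y.
Proof. by rewrite (jdot_herm z (x + y)) (jdot_herm z x) (jdot_herm z y) jdotDl rmorphD. Qed.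
Lemma jdotZr (c : C) x z : jdot z (c *: x) = (c^*)%C * jdot z x.
Proof. by rewrite (jdot_herm z) (jdot_herm z x) jdotZl rmorphM. Qed.
Lemma jdotZr_real t x z : jdot z (t%:C *: x) = t%:C * jdot z x.
Proof. by rewrite jdotZr conjc_real. Qed.
Lemma jdot0l z : jdot 0 z = 0.
Proof. by rewrite -(scale0r 0) jdotZl mul0r. Qed.
Lemma jdotNl x z : jdot (- x) z = - jdot x z.
Proof. by rewrite -scaleN1r jdotZl mulN1r. Qed.
Lemma jdotNr x z : jdot z (- x) = - jdot z x.
Proof. by rewrite -scaleN1r jdotZr rmorphN1 mulN1r. Qed.
Lemma jdotBl x y z : jdot (x - y) z = jdot x z - jdot y z.
Proof. by rewrite jdotDl jdotNl. Qed.

Lemma Im_ip_diag x : complex.Im (ip x x) = 0.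
Proof.
have : complex.Im (ip x x) = - complex.Im (ip x x) by rewrite {1}pip_herm ImJ.
lra.
Qed.
Lemma Re_ip_pos a : P a = 0 -> 0 <= complex.Re (ip a a).
Proof.
move=> Pa; have [->|na] := eqVneq a 0; first by rewrite ip0l.
by have := ppos_def Pa na; rewrite ltcE => /andP[_ /ltW].
Qed.
Lemma Re_ip_neg a : P a = a -> complex.Re (ip a a) <= 0.
Proof.
move=> Pa; have [->|na] := eqVneq a 0; first by rewrite ip0l.
by have := pneg_def Pa na; rewrite ltcE => /andP[_ /ltW].
Qed.

Lemma jdot_diag x : jdot x x = (jnorm2 x)%:C.
Proof.
have : complex.Im (jdot x x) = 0 by rewrite /jdot ImB !Im_ip_diag subrr.
by rewrite /jnorm2; case: (jdot x x) => a b /= ->.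
Qed.

Lemma jnorm2_ge0 x : 0 <= jnorm2 x.
Proof.
rewrite /jnorm2 /jdot ReB subr_ge0.
exact: le_trans (Re_ip_neg (pPm_idem x)) (Re_ip_pos (Pm_subK x)).
Qed.

Lemma jnorm2_eq0 x : jnorm2 x <= 0 -> x = 0.
Proof.
rewrite /jnorm2 /jdot ReB => h.
have h1 := Re_ip_pos (Pm_subK x); have h2 := Re_ip_neg (pPm_idem x).
have e2 : P x = 0.
  apply/eqP; apply: contraT => nz; have := pneg_def (pPm_idem x) nz.
  by rewrite ltcE => /andP[_]; lra.
apply/eqP; apply: contraT => nz.
have := ppos_def (Pm_subK x); rewrite e2 subr0 => /(_ nz).
by rewrite ltcE => /andP[_]; move: h h1 h2; rewrite e2 subr0; lra.
Qed.

Lemma jnorm2D a b : jnorm2 (a + b) = jnorm2 a + jnorm2 b + 2 * complex.Re (jdot a b).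
Proof.
rewrite /jnorm2 jdotDl !jdotDr (jdot_herm b a).
by move: (jdot a a) (jdot a b) (jdot b b) => [? ?] [? ?] [? ?] /=; ring.
Qed.
Lemma jnorm2N a : jnorm2 (- a) = jnorm2 a.
Proof. by rewrite /jnorm2 jdotNl jdotNr opprK. Qed.
Lemma jnorm2B a b : jnorm2 (a - b) = jnorm2 a + jnorm2 b - 2 * complex.Re (jdot a b).
Proof. by rewrite jnorm2D jnorm2N jdotNr ReN; ring. Qed.
Lemma jnorm2Z t a : jnorm2 (t%:C *: a) = t ^+ 2 * jnorm2 a.
Proof. by rewrite /jnorm2 jdotZl jdotZr; move: (jdot a a) => [? ?] /=; ring. Qed.
Lemma jnorm2_scalei a : jnorm2 ('i *: a) = jnorm2 a.
Proof. by rewrite /jnorm2 jdotZl jdotZr; move: (jdot a a) => [? ?] /=; ring. Qed.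
Lemma jnorm2_jsym a : jnorm2 (jsym a) = jnorm2 a.
Proof.
rewrite /jnorm2 /jdot Pm_jsym.
have -> : jsym a - - P a = a - P a by rewrite /jsym opprK subrK.
by rewrite ipNl ipNr opprK.
Qed.

Lemma jnorm2D_le a b : jnorm2 (a + b) <= 2 * jnorm2 a + 2 * jnorm2 b.
Proof. by have := jnorm2_ge0 (a - b); rewrite jnorm2B jnorm2D; lra. Qed.

(* Weighted AM-GM, obtained from [2 Re [a, b] <= |a|^2 + |b|^2] applied to
   [sqrt c a] and [b / sqrt c]. *)
Lemma Re_jdot_le (c : R) a b : 0 < c ->
  2 * complex.Re (jdot a b) <= c * jnorm2 a + c^-1 * jnorm2 b.
Proof.
move=> c0; set s := Num.sqrt c.
have s0 : 0 < s by rewrite /s sqrtr_gt0.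
have ss : s ^+ 2 = c by rewrite /s sqr_sqrtr // ltW.
have -> : jdot a b = jdot (s%:C *: a) (s^-1%:C *: b).
  rewrite jdotZl jdotZr_real; move: (jdot a b) => [p q].
  apply/eqP; rewrite eq_complex /=; apply/andP; split; apply/eqP; field; exact: lt0r_neq0.
have := jnorm2_ge0 (s%:C *: a - s^-1%:C *: b).
by rewrite jnorm2B !jnorm2Z ss exprVn ss; lra.
Qed.

Lemma Re_jdot_abs_le (c : R) a b : 0 < c ->
  2 * `|complex.Re (jdot a b)| <= c * jnorm2 a + c^-1 * jnorm2 b.
Proof.
move=> c0; have h1 := Re_jdot_le a b c0; have := Re_jdot_le (- a) b c0.
rewrite jnorm2N jdotNl ReN.
by case: (lerP 0 (complex.Re (jdot a b))) => h; [rewrite ger0_norm | rewrite ltr0_norm]; lra.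
Qed.

Lemma Im_jdot_abs_le (c : R) a b : 0 < c ->
  2 * `|complex.Im (jdot a b)| <= c * jnorm2 a + c^-1 * jnorm2 b.
Proof.
move=> c0; have := Re_jdot_abs_le ('i *: a) b c0.
by rewrite jnorm2_scalei jdotZl ReiM normrN.
Qed.

End FundamentalNorm.

Section RealFacts.
Variable R : realType.

Lemma le0_eps (a : R) : (forall e, 0 < e -> a <= e) -> a <= 0.
Proof.
move=> h; rewrite leNgt; apply/negP => a0.
by have := h (a / 2); rewrite divr_gt0 // => /(_ isT); lra.
Qed.

Lemma geometric_sum_le2 (r : R) k : 0 <= r <= 1 / 2 -> \sum_(j < k) r ^+ j <= 2.
Proof.
move=> /andP[r0 r1]; elim: k => [|k ih]; first by rewrite big_ord0.
rewrite big_ord_recl expr0.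
under eq_bigr => j _ do rewrite exprS.
rewrite -mulr_sumr.
have : r * \sum_(i < k) r ^+ i <= 1 / 2 * 2.
  by apply: ler_pM => //; rewrite sumr_ge0 // => i _; exact: exprn_ge0.
lra.
Qed.

Lemma exists_mul_expr_lt (q K e : R) : 0 <= q <= 1 / 2 -> 0 <= K -> 0 < e ->
  exists N, forall n, (N <= n)%N -> K * q ^+ n < e.
Proof.
move=> /andP[q0 q1] K0 e0; exists (Num.Def.archi_bound (K / e)) => n hn.
have h2 : 0 < (2 : R) ^+ n by rewrite exprn_gt0.
have hK : K < e * 2 ^+ n by move: (upper_nthrootP hn); rewrite ltr_pdivrMr // mulrC.
have hq : q ^+ n * 2 ^+ n <= 1.
  rewrite -exprMn; apply: exprn_ile1; [exact: mulr_ge0 | lra].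
rewrite -(ltr_pM2r h2) -mulrA.
apply: le_lt_trans hK; rewrite -[leRHS]mulr1; exact: ler_wpM2l.
Qed.

Lemma exists_inv_natS_lt (e : R) : 0 < e ->
  exists N, forall n, (N <= n)%N -> 1 / (n.+1)%:R < e.
Proof.
move=> e0; exists (Num.Def.archi_bound (1 / e)) => n hn.
have h1 : 1 / e < (Num.Def.archi_bound (1 / e))%:R.
  by apply: archi_boundP; rewrite divr_ge0 // ltW.
have h2 : (Num.Def.archi_bound (1 / e))%:R <= (n.+1)%:R :> R by rewrite ler_nat; apply: leqW.
rewrite ltr_pdivrMr ?ltr0Sn // mulrC -ltr_pdivrMr //; exact: lt_le_trans h2.
Qed.

(* Evaluate at [l = - a / (r + 1)]. *)
Lemma eq0_of_quadratic_ge0 (a r : R) : 0 <= r ->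
  (forall l : R, 0 <= 2 * l * a + l ^+ 2 * r) -> a = 0.
Proof.
move=> r0 h; have r1 : 0 < r + 1 by lra.
have := h (- a / (r + 1)).
have -> : 2 * (- a / (r + 1)) * a + (- a / (r + 1)) ^+ 2 * r
          = - (a ^+ 2 * (r + 2)) / (r + 1) ^+ 2 by field; exact: lt0r_neq0.
rewrite pmulr_lge0 ?invr_gt0 ?exprn_gt0 // oppr_ge0 pmulr_lle0; last by lra.
by move=> ha; apply/eqP; rewrite -sqrf_eq0 eq_le ha sqr_ge0.
Qed.

Lemma eq0_of_abs_le_mul (x K d : R) : 0 < d -> 0 <= K ->
  (forall tau, 0 < tau -> tau < d -> `|x| <= tau * K) -> x = 0.
Proof.
move=> d0 K0 h; apply/eqP; rewrite -normr_le0; apply: le0_eps => e e0.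
pose tau := Num.min (d / 2) (e / (K + 1)).
have t0 : 0 < tau by rewrite lt_min !divr_gt0 //; lra.
have t1 : tau < d by rewrite /tau gt_min; apply/orP; left; lra.
have t2 : tau <= e / (K + 1) by rewrite /tau ge_min lexx orbT.
apply: (le_trans (h _ t0 t1)); apply: (le_trans (ler_wpM2r K0 t2)).
by rewrite mulrAC ler_pdivrMr ?ler_pM2l //; lra.
Qed.

Lemma exists_small_sqr_mul (M : R) : 0 < M ->
  exists d : R, 0 < d /\ forall t : R, `|t| < d -> t ^+ 2 * M <= 1 / 16.
Proof.
move=> M0; have d0 : 0 < 1 / (4 * (M + 1)) by rewrite divr_gt0 // mulr_gt0 //; lra.
exists (1 / (4 * (M + 1))); split => // t ht.
have h1 : t ^+ 2 <= (1 / (4 * (M + 1))) ^+ 2.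
  by rewrite -real_normK ?num_real //; apply: lerXn2r; rewrite ?nnegrE ?normr_ge0 ?ltW.
apply: (le_trans (ler_wpM2r (ltW M0) h1)).
have -> : (1 / (4 * (M + 1))) ^+ 2 * M = 1 / 16 * (M / ((M + 1) * (M + 1))).
  by field; lra.
apply: ler_piMr; first by rewrite divr_ge0.
by rewrite ler_pdivrMr ?mul1r; [nra | rewrite mulr_gt0 //; lra].
Qed.

End RealFacts.

Section LinearMaps.
Variable R : realType.
Variables X Y : pspace R.
Variable f : X -> Y.
Hypothesis hf : is_linear f.

Lemma linD x y : f (x + y) = f x + f y.
Proof. by have := hf 1 x y; rewrite !scale1r. Qed.
Lemma lin0 : f 0 = 0.
Proof. by have /eqP := linD 0 0; rewrite addr0 -subr_eq addrN eq_sym => /eqP. Qed.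
Lemma linZ a x : f (a *: x) = a *: f x.
Proof. by have := hf a x 0; rewrite !addr0 lin0 addr0. Qed.
Lemma linB x y : f (x - y) = f x - f y.
Proof. by rewrite linD -scaleN1r linZ scaleN1r. Qed.

End LinearMaps.

Lemma is_linear_iter (R : realType) (X : pspace R) (A : X -> X) k :
  is_linear A -> is_linear (iter k A).
Proof. by move=> hA; elim: k => [|k ih] a x y //=; rewrite ih hA. Qed.

Lemma bounded_jnorm2 (R : realType) (X Y : pspace R) (f : X -> Y) : is_bounded f ->
  exists M : R, 0 < M /\ forall x, jnorm2 (f x) <= M * jnorm2 x.
Proof.
case=> M hM; exists (`|complex.Re M| + 1); split.
  by apply: (lt_le_trans ltr01); rewrite lerDr.
move=> x; have := hM x; rewrite !pnsqE !jdot_diag lecE => /andP[_].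
rewrite ReMrr /= => h; apply: (le_trans h); apply: ler_wpM2r; first exact: jnorm2_ge0.
by apply: (le_trans (ler_norm _)); rewrite lerDl.
Qed.

Lemma jnorm2_iter_le (R : realType) (X : pspace R) (A : X -> X) (M : R) k :
  0 < M -> (forall x, jnorm2 (A x) <= M * jnorm2 x) ->
  forall x, jnorm2 (iter k A x) <= M ^+ k * jnorm2 x.
Proof.
move=> M0 hM x; elim: k => [|k ih]; first by rewrite expr0 mul1r.
rewrite iterS exprS -mulrA; apply: (le_trans (hM _)); apply: ler_wpM2l => //; exact: ltW.
Qed.

Section Completeness.
Variable R : realType.
Variable X : pspace R.

Lemma jnorm2_complete (s : nat -> X) :
  (forall e : R, 0 < e -> exists N, forall m n, (N <= m)%N -> (N <= n)%N ->
     jnorm2 (s m - s n) < e) ->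
  exists x, forall e : R, 0 < e -> exists N, forall n, (N <= n)%N -> jnorm2 (s n - x) < e.
Proof.
move=> hc; have [x hx] : exists x, forall eps : R[i], 0 < eps ->
    exists N, forall n, (N <= n)%N -> pnsq (s n - x) < eps.
  apply: (@pcomplete R X s) => eps; rewrite ltcE /= => /andP[/eqP hi hr].
  have [N hN] := hc _ hr; exists N => m n hm hn.
  change (jdot (s m - s n) (s m - s n) < eps).
  by rewrite jdot_diag ltcE /= hi eqxx /= hN.
exists x => e e0; have [|N hN] := hx (e%:C); first by rewrite ltcR.
by exists N => n hn; have := hN n hn; rewrite pnsqE jdot_diag ltcR.
Qed.

Lemma jnorm2_sum_le k (v : nat -> X) :
  jnorm2 (\sum_(j < k) v j) <= 2 * \sum_(j < k) 2 ^+ j * jnorm2 (v j).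
Proof.
elim: k v => [|k ih] v; first by rewrite !big_ord0 mulr0 /jnorm2 jdot0l.
rewrite big_ord_recl [X in _ <= 2 * X]big_ord_recl /=.
apply: (le_trans (jnorm2D_le _ _)).
have h := ih (fun j => v j.+1).
have eb (i : 'I_k) : bump 0 i = i.+1 by rewrite /bump leq0n add1n.
under eq_bigr => i _ do rewrite eb.
under [X in _ <= 2 * (_ + X)]eq_bigr => i _ do rewrite eb exprS -mulrA.
by rewrite -mulr_sumr expr0 mul1r; lra.
Qed.

End Completeness.

Lemma is_linear_IminusZ (R : realType) (X : pspace R) (A : X -> X) (z : R[i]) :
  is_linear A -> is_linear (IminusZ z A).
Proof.
move=> hA a x y; rewrite /IminusZ hA scalerDr !scalerA mulrC -scalerA scalerBr.
by rewrite opprD addrACA.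
Qed.

Section Resolvent.
Variable R : realType.
Variables (X : pspace R) (A : X -> X) (M t : R).
Hypotheses (hA : is_linear A) (M0 : 0 < M)
  (hM : forall x, jnorm2 (A x) <= M * jnorm2 x) (ht : t ^+ 2 * M <= 1 / 16).
Local Notation L := (IminusZ t%:C A).
Local Notation q := (t ^+ 2 * M).

Lemma q_ge0 : 0 <= q. Proof. by rewrite mulr_ge0 // ?sqr_ge0 // ltW. Qed.

Lemma jnorm2_scale_op x : jnorm2 (t%:C *: A x) <= q * jnorm2 x.
Proof. by rewrite jnorm2Z -mulrA; apply: ler_wpM2l; [exact: sqr_ge0 | exact: hM]. Qed.

Lemma jnorm2_le_IminusZ x : jnorm2 x <= 4 * jnorm2 (L x).
Proof.
have h1 : jnorm2 x <= 2 * jnorm2 (L x) + 2 * jnorm2 (t%:C *: A x).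
  by rewrite -[in X in X <= _](subrK (t%:C *: A x) x); exact: jnorm2D_le.
have h2 : q * jnorm2 x <= 1 / 16 * jnorm2 x by apply: ler_wpM2r; [exact: jnorm2_ge0|].
by have := jnorm2_scale_op x; have := jnorm2_ge0 (L x); lra.
Qed.

Lemma IminusZ_inj x y : L x = L y -> x = y.
Proof.
move=> e; apply/eqP; rewrite -subr_eq0; apply/eqP; apply: jnorm2_eq0.
by have := jnorm2_le_IminusZ (x - y); rewrite (linB (is_linear_IminusZ _ hA)) e subrr /jnorm2 jdot0l /=; lra.
Qed.

(* Picard iterates of [x |-> y + t A x], whose fixed point solves [L x = y]. *)
Definition picard y n := iter n (fun x => y + t%:C *: A x) 0.

Lemma jnorm2_picard_step y n :
  jnorm2 (picard y n.+1 - picard y n) <= q ^+ n * jnorm2 y.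
Proof.
elim: n => [|n ih]; first by rewrite /picard /= lin0 // scaler0 addr0 subr0 expr0 mul1r.
have -> : picard y n.+2 - picard y n.+1 = t%:C *: A (picard y n.+1 - picard y n).
  by rewrite /picard !iterS opprD addrACA subrr add0r -scalerBr -(linB hA).
apply: (le_trans (jnorm2_scale_op _)); rewrite [_ ^+ n.+1]exprS -(mulrA q).
by apply: ler_wpM2l => //; exact: q_ge0.
Qed.

Lemma jnorm2_picard_cauchy y n k :
  jnorm2 (picard y (n + k) - picard y n) <= 4 * q ^+ n * jnorm2 y.
Proof.
pose d j := picard y (n + j).+1 - picard y (n + j).
have tele : picard y (n + k) - picard y n = \sum_(j < k) d j.
  elim: k => [|k ih]; first by rewrite addn0 subrr big_ord0.
  by rewrite big_ord_recr /= -ih addnS /d [RHS]addrC addrA subrK.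
have hq : 0 <= 2 * q <= 1 / 2.
  by have := q_ge0; have := ht; move=> *; apply/andP; split; lra.
have hd : \sum_(j < k) 2 ^+ j * jnorm2 (d j) <= q ^+ n * jnorm2 y * 2.
  apply: (@le_trans _ _ (q ^+ n * jnorm2 y * \sum_(j < k) (2 * q) ^+ j)); last first.
    apply: ler_wpM2l; last exact: geometric_sum_le2.
    by rewrite mulr_ge0 ?exprn_ge0 ?q_ge0 ?jnorm2_ge0.
  rewrite mulr_sumr; apply: ler_sum => j _.
  apply: (@le_trans _ _ (2 ^+ j * (q ^+ (n + j) * jnorm2 y))).
    by apply: ler_wpM2l; [exact: exprn_ge0 | exact: jnorm2_picard_step].
  by rewrite [(2 * q) ^+ j]exprMn [q ^+ (n + j)]exprD le_eqVlt; apply/orP; left; apply/eqP; ring.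
rewrite tele; apply: (le_trans (jnorm2_sum_le k d)).
have -> : 4 * q ^+ n * jnorm2 y = 2 * (q ^+ n * jnorm2 y * 2) by ring.
by apply: ler_wpM2l.
Qed.

Lemma picard_cvg y : exists x, forall e : R, 0 < e ->
  exists N, forall n, (N <= n)%N -> jnorm2 (picard y n - x) < e.
Proof.
apply: jnorm2_complete => e e0.
have hq : 0 <= q <= 1 / 2.
  by have := q_ge0; have := ht; move=> *; apply/andP; split; lra.
have [N hN] := exists_mul_expr_lt hq (mulr_ge0 (ler0n _ 4) (jnorm2_ge0 y)) e0.
exists N => m n hm hn.
wlog nm : m n hm hn / (n <= m)%N.
  move=> hw; case: (leqP n m) => h; first exact: hw.
  by rewrite -jnorm2N opprB; apply: hw => //; exact: ltnW.
rewrite -(subnKC nm); apply: (le_lt_trans (jnorm2_picard_cauchy _ _ _)).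
by rewrite mulrAC; apply: hN.
Qed.

Lemma IminusZ_surj y : exists x, L x = y.
Proof.
have [x hx] := picard_cvg y; exists x.
apply/eqP; rewrite -subr_eq0; apply/eqP; apply: jnorm2_eq0; apply: le0_eps => e e0.
have [|N hN] := hx (e / 8); first by rewrite divr_gt0.
have -> : L x - y = (x - picard y N.+1) + t%:C *: A (picard y N - x).
  rewrite /IminusZ /picard iterS (linB hA) scalerBr.
  by rewrite opprD !addrA subrK addrAC.
apply: (le_trans (jnorm2D_le _ _)).
have h1 := hN N.+1 (leqnSn _); rewrite -jnorm2N opprB in h1.
have h2 := hN N (leqnn _).
have h3 := jnorm2_scale_op (picard y N - x).
have h4 : q * jnorm2 (picard y N - x) <= 1 / 16 * jnorm2 (picard y N - x).
  by apply: ler_wpM2r; [exact: jnorm2_ge0|].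
by have := jnorm2_ge0 (picard y N - x); lra.
Qed.

Local Notation G := (opinv L).

Lemma opinv_IminusZ_spec : (forall x, G (L x) = x) /\ (forall y, L (G y) = y).
Proof.
apply: (@epsilon_spec _ _ (fun g : X -> X => (forall x, g (L x) = x) /\ (forall x, L (g x) = x))).
pose g y := proj1_sig (constructive_indefinite_description _ (IminusZ_surj y)).
have hg y : L (g y) = y by rewrite /g; case: constructive_indefinite_description.
by exists g; split => // x; apply: IminusZ_inj; exact: hg.
Qed.

Lemma opinv_IminusZK x : G (L x) = x. Proof. exact: opinv_IminusZ_spec.1. Qed.
Lemma IminusZ_opinvK y : L (G y) = y. Proof. exact: opinv_IminusZ_spec.2. Qed.

Lemma is_linear_opinv_IminusZ : is_linear G.
Proof.
by move=> a x y; apply: IminusZ_inj; rewrite (is_linear_IminusZ _ hA) !IminusZ_opinvK.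
Qed.

Lemma jnorm2_opinv_IminusZ y : jnorm2 (G y) <= 4 * jnorm2 y.
Proof. by have := jnorm2_le_IminusZ (G y); rewrite IminusZ_opinvK. Qed.

Lemma opinv_IminusZ_expand y : G y = y + t%:C *: A (G y).
Proof. by rewrite -{2}(IminusZ_opinvK y) /IminusZ subrK. Qed.

End Resolvent.

Lemma Re_jdot_small (R : realType) (X : pspace R) (h : X) (e : R) : 0 < e ->
  exists d : R, 0 < d /\ forall x : X, jnorm2 x < d -> 2 * `|complex.Re (jdot x h)| < e.
Proof.
move=> e0; pose K := jnorm2 h + 1.
have K0 : 0 < K by rewrite /K; have := jnorm2_ge0 h; lra.
pose c := 2 * K / e.
have c0 : 0 < c by rewrite /c mulr_gt0 // ?invr_gt0 // mulr_gt0.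
exists (e / (2 * c)); split; first by rewrite divr_gt0 // mulr_gt0.
move=> x hx; apply: (le_lt_trans (Re_jdot_abs_le x h c0)).
have h1 : c * jnorm2 x < c * (e / (2 * c)) by rewrite ltr_pM2l.
have h2 : c * (e / (2 * c)) = e / 2 by field; rewrite gt_eqF.
have h3 : c^-1 * jnorm2 h <= c^-1 * K.
  by apply: ler_wpM2l; [rewrite invr_ge0 ltW | rewrite /K lerDl ler01].
have h4 : c^-1 * K = e / 2 by rewrite /c; field; rewrite ?gt_eqF.
lra.
Qed.

(* The representing vector minimises F x = |x|^2 - 2 Re <f x, y>: a minimising
   sequence is Cauchy by the parallelogram law, and the first-order condition
   at its limit identifies the functional. *)
Section Riesz.
Variable R : realType.
Variables (X Y : pspace R) (f : X -> Y) (M : R) (y : Y).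
Hypotheses (hf : is_linear f) (M0 : 0 < M)
  (hM : forall x, jnorm2 (f x) <= M * jnorm2 x).

Let phi h := complex.Re (pip (f h) y).
Let F x := jnorm2 x - 2 * phi x.

Lemma phiD a b : phi (a + b) = phi a + phi b.
Proof. by rewrite /phi (linD hf) ipDl ReD. Qed.
Lemma phiZ_real (t : R) a : phi (t%:C *: a) = t * phi a.
Proof. by rewrite /phi (linZ hf) ipZl ReMrl. Qed.

Lemma F_lower_bound x : jnorm2 x / 2 - 2 * M * jnorm2 y <= F x.
Proof.
rewrite /F /phi ip_jdot.
have c0 : 0 < (2 * M)^-1 by rewrite invr_gt0 mulr_gt0.
have := Re_jdot_le (f x) (jsym y) c0; rewrite jnorm2_jsym invrK => h.
have h2 : (2 * M)^-1 * jnorm2 (f x) <= (2 * M)^-1 * (M * jnorm2 x).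
  by apply: ler_wpM2l; [rewrite ltW | exact: hM].
have h3 : (2 * M)^-1 * (M * jnorm2 x) = jnorm2 x / 2 by field; rewrite gt_eqF.
lra.
Qed.

Let values : classical_sets.set R := fun r => exists x, F x = r.
Let m := inf values.

Lemma has_inf_values : classical_sets.has_inf values.
Proof.
split; first by exists (F 0); exists 0.
exists (- (2 * M * jnorm2 y)) => r [x <-].
by have := F_lower_bound x; have := jnorm2_ge0 x; lra.
Qed.

Lemma inf_le_F x : m <= F x.
Proof. by apply: (ge_inf has_inf_values.2); exists x. Qed.

Lemma exists_almost_min n : exists x, F x < m + 1 / (n.+1)%:R.
Proof.
have e0 : (0 : R) < 1 / (n.+1)%:R by rewrite divr_gt0 // ltr0Sn.
by have [r [x <-] hr] := inf_adherent e0 has_inf_values; exists x.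
Qed.

Let xs n := proj1_sig (constructive_indefinite_description _ (exists_almost_min n)).
Lemma xs_almost_min n : F (xs n) < m + 1 / (n.+1)%:R.
Proof. by rewrite /xs; case: constructive_indefinite_description. Qed.

Lemma F_shift x (l : R) h :
  F (x + l%:C *: h) = F x + 2 * l * (complex.Re (jdot x h) - phi h) + l ^+ 2 * jnorm2 h.
Proof.
rewrite /F jnorm2D jnorm2Z phiD phiZ_real jdotZr_real ReMrl.
by move: (complex.Re (jdot x h)) => ?; ring.
Qed.

Lemma jnorm2_sub_le_F a b : jnorm2 (a - b) <= 2 * F a + 2 * F b - 4 * m.
Proof.
have := inf_le_F ((1 / 2)%:C *: (a + b)).
rewrite /F jnorm2Z phiZ_real phiD.
by have := jnorm2B a b; have := jnorm2D a b; lra.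
Qed.

Lemma xs_cauchy (e : R) : 0 < e ->
  exists N, forall m n, (N <= m)%N -> (N <= n)%N -> jnorm2 (xs m - xs n) < e.
Proof.
move=> e0; have e4 : 0 < e / 4 by rewrite divr_gt0.
have [N hN] := exists_inv_natS_lt e4.
exists N => i j hi hj; apply: (le_lt_trans (jnorm2_sub_le_F _ _)).
have := xs_almost_min i; have := xs_almost_min j; have := hN i hi; have := hN j hj.
by move: (1 / (i.+1)%:R) (1 / (j.+1)%:R) => a b; lra.
Qed.

Lemma limit_first_order z0 :
  (forall e : R, 0 < e -> exists N, forall n, (N <= n)%N -> jnorm2 (xs n - z0) < e) ->
  forall h (l : R), 0 <= 2 * l * (complex.Re (jdot z0 h) - phi h) + l ^+ 2 * jnorm2 h.
Proof.
move=> hz h l; rewrite -oppr_le0; apply: le0_eps => e e0.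
have e2 : 0 < e / 2 by rewrite divr_gt0.
have [d [d0 hd]] := Re_jdot_small (l%:C *: h) e2.
have [N1 hN1] := hz d d0.
have [N2 hN2] := exists_inv_natS_lt e2.
pose n := maxn N1 N2.
have h1 := hd _ (hN1 n (leq_maxl _ _)).
have h2 := hN2 n (leq_maxr _ _).
have h4 := inf_le_F (xs n + l%:C *: h); rewrite F_shift in h4.
have h5 := xs_almost_min n.
have e1 : 2 * l * complex.Re (jdot z0 h)
    = 2 * l * complex.Re (jdot (xs n) h) - 2 * complex.Re (jdot (xs n - z0) (l%:C *: h)).
  rewrite jdotBl !jdotZr_real; move: (jdot (xs n) h) (jdot z0 h) => a b.
  by rewrite ReB !ReMrl; ring.
move: h1; set r := complex.Re (jdot (xs n - z0) (l%:C *: h)) => h1.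
have : `|2 * r| < e / 2 by rewrite normrM gtr0_norm.
rewrite ltr_norml => /andP[h6 h7].
by move: e1 h4 h5 h2; move: (complex.Re (jdot (xs n) h)) (1 / (n.+1)%:R) => *; lra.
Qed.

Lemma riesz_representation : exists z : X, forall h, pip (f h) y = jdot h z.
Proof.
have [z0 hz] := jnorm2_complete xs_cauchy.
have hre h : complex.Re (jdot h z0) = phi h.
  rewrite jdot_herm ReJ; apply/eqP; rewrite -subr_eq0; apply/eqP.
  exact: (eq0_of_quadratic_ge0 (jnorm2_ge0 h) (limit_first_order hz h)).
exists z0 => h; apply: complex_eqP; first by rewrite hre.
have := hre ('i *: h); rewrite jdotZl /phi (linZ hf) ipZl.
by move: (jdot h z0) (pip (f h) y) => [a b] [c d] /=; lra.
Qed.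

End Riesz.

Section Adjoint.
Variable R : realType.

Lemma adj_spec (X Y : pspace R) (f : X -> Y) : bounded_op f ->
  forall x y, pip (f x) y = pip x (adj f y).
Proof.
case=> hf /bounded_jnorm2 [M [M0 hM]].
have ex y : exists z : X, forall h, pip (f h) y = pip h z.
  have [z hz] := riesz_representation y hf M0 hM.
  by exists (jsym z) => h; rewrite (ip_jdot h) jsymK -hz.
apply: (@epsilon_spec _ _ (fun g : Y -> X => forall x y, pip (f x) y = pip x (g y))).
pose g y := proj1_sig (constructive_indefinite_description _ (ex y)).
by exists g => x y; rewrite /g; case: constructive_indefinite_description => z /=; apply.
Qed.

Lemma ip_nondeg (X : pspace R) (a b : X) : (forall z, pip z a = pip z b) -> a = b.
Proof.
move=> h; apply/eqP; rewrite -subr_eq0; apply/eqP; apply: jnorm2_eq0.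
have : pip (jsym (a - b)) (a - b) = 0 by rewrite ipBr (h (jsym (a - b))) subrr.
by rewrite ip_jdot jdot_diag jnorm2_jsym => /(congr1 (@complex.Re R)) /= ->.
Qed.

End Adjoint.

Lemma ip_parts_abs_le (R : realType) (X : pspace R) (a b : X) :
  `|complex.Re (pip a b)| <= jnorm2 a + jnorm2 b /\
  `|complex.Im (pip a b)| <= jnorm2 a + jnorm2 b.
Proof.
have := Re_jdot_abs_le a (jsym b) ltr01; have := Im_jdot_abs_le a (jsym b) ltr01.
rewrite -!ip_jdot jnorm2_jsym invr1 !mul1r => hi hr.
by have := jnorm2_ge0 a; have := jnorm2_ge0 b; split; lra.
Qed.



Lemma complex_eq0_of_small (R : realType) (w : R[i]) (K d : R) : 0 < d -> 0 <= K ->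
  (forall tau, 0 < tau -> tau < d ->
     `|complex.Re w| <= tau * K /\ `|complex.Im w| <= tau * K) -> w = 0.
Proof.
move=> d0 K0 h; apply: complex_eqP.
  by apply: (eq0_of_abs_le_mul d0 K0) => tau t0 td; case: (h tau t0 td).
by apply: (eq0_of_abs_le_mul d0 K0) => tau t0 td; case: (h tau t0 td).
Qed.

(* [<A^j (I - s A)^{-1} B v, A^k (I - t A)^{-1} B u>], whose value at
   [s = t = 0] is the moment [<A^j B v, A^k B u>]. *)
Definition resolvent_gram (R : realType) (U Z : pspace R) (A : Z -> Z) (B : U -> Z)
    j k (s t : R) (u v : U) :=
  pip (iter j A (opinv (IminusZ s%:C A) (B v))) (iter k A (opinv (IminusZ t%:C A) (B u))).

Section OneSystem.
Variable R : realType.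
Variables (U X : pspace R) (A : X -> X) (B : U -> X) (M d : R).
Hypotheses (hA : bounded_op A) (hB : bounded_op B) (M0 : 0 < M)
  (hM : forall x, jnorm2 (A x) <= M * jnorm2 x)
  (hd : forall t : R, `|t| < d -> t ^+ 2 * M <= 1 / 16).
Local Notation L t := (IminusZ t%:C A).
Local Notation L' t := (IminusZ t%:C (adj A)).
Local Notation G t := (opinv (L t)).

Lemma opinv_IminusZ0 y : G 0 y = y.
Proof.
pose L := L 0.
have L0 x : L x = x by rewrite /L /IminusZ (_ : (0 : R)%:C = 0) // scale0r subr0.
have [hL _] : (forall x, opinv L (L x) = x) /\ (forall x, L (opinv L x) = x).
  apply: (@epsilon_spec _ _ (fun g : X -> X => (forall x, g (L x) = x) /\ (forall x, L (g x) = x))).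
  by exists id; split => x; rewrite /= L0.
by have := hL y; rewrite L0.
Qed.

Lemma ip_IminusZ_adj (s : R) x z : pip (L s x) z = pip x (L' s z).
Proof. by rewrite /IminusZ ipBl ipBr ipZl ipZr_real (adj_spec hA). Qed.

Lemma bounded_opinv_IminusZ (s : R) : `|s| < d -> bounded_op (G s).
Proof.
move=> hs; have ht := hd hs; split; first exact: (is_linear_opinv_IminusZ hA.1 M0 hM ht).
exists (4%:R : R)%:C => y; rewrite !pnsqE !jdot_diag -rmorphM lecR.
exact: (jnorm2_opinv_IminusZ hA.1 M0 hM ht).
Qed.

(* The adjoint of the resolvent inverts [I - s A^*]. *)
Lemma IminusZ_adj_opinvK (s : R) : `|s| < d -> forall w, L' s (opinv (L' s) w) = w.
Proof.
move=> hs; have ht := hd hs.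
suff [] : (forall x, opinv (L' s) (L' s x) = x) /\ (forall w, L' s (opinv (L' s) w) = w) by [].
apply: (@epsilon_spec _ _ (fun g : X -> X => (forall x, g (L' s x) = x) /\ (forall x, L' s (g x) = x))).
exists (adj (G s)); split => x; apply: ip_nondeg => z.
  by rewrite -(adj_spec (bounded_opinv_IminusZ hs)) -ip_IminusZ_adj (IminusZ_opinvK hA.1 M0 hM ht).
by rewrite -ip_IminusZ_adj -(adj_spec (bounded_opinv_IminusZ hs)) (opinv_IminusZK hA.1 M0 hM ht).
Qed.

Lemma ip_adj_resolvent (s t : R) (u v : U) : `|s| < d ->
  pip v (adj B (opinv (L' s) (G t (B u)))) = pip (G s (B v)) (G t (B u)).
Proof.
move=> hs; have ht := hd hs.
by rewrite -(adj_spec hB) -{1}(IminusZ_opinvK hA.1 M0 hM ht (B v)) ip_IminusZ_adj IminusZ_adj_opinvK.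
Qed.

Lemma iter_opinv_IminusZ (t : R) k y : `|t| < d ->
  iter k A (G t y) = iter k A y + t%:C *: iter k.+1 A (G t y).
Proof.
move=> hs; have ht := hd hs; have hk := is_linear_iter k hA.1.
by rewrite {1}(opinv_IminusZ_expand hA.1 M0 hM ht y) (linD hk) (linZ hk) iterSr.
Qed.

Lemma jnorm2_iter_opinv_IminusZ (t : R) k y : `|t| < d ->
  jnorm2 (iter k A (G t y)) <= M ^+ k * (4 * jnorm2 y).
Proof.
move=> hs; apply: (le_trans (jnorm2_iter_le k M0 hM _)).
by apply: ler_wpM2l; [rewrite exprn_ge0 // ltW | exact: (jnorm2_opinv_IminusZ hA.1 M0 hM (hd hs))].
Qed.

Lemma resolvent_gram_expand j k (s t : R) u v : `|t| < d ->
  resolvent_gram A B j k s t u v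
  = resolvent_gram A B j k s 0 u v + t%:C * resolvent_gram A B j k.+1 s t u v.
Proof.
move=> ht; rewrite /resolvent_gram opinv_IminusZ0 (iter_opinv_IminusZ k _ ht).
by rewrite ipDr ipZr_real.
Qed.

Lemma resolvent_gram_parts_le j k (s t : R) u v : `|t| < d ->
  let c := jnorm2 (iter j A (G s (B v))) + M ^+ k * (4 * jnorm2 (B u)) in
  `|complex.Re (resolvent_gram A B j k s t u v)| <= c /\
  `|complex.Im (resolvent_gram A B j k s t u v)| <= c.
Proof.
move=> ht c; have [hr hi] := ip_parts_abs_le (iter j A (G s (B v))) (iter k A (G t (B u))).
have hb := jnorm2_iter_opinv_IminusZ k (B u) ht.
by split; [apply: le_trans hr _ | apply: le_trans hi _]; rewrite lerD2l.
Qed.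

End OneSystem.

Section Moments.
Variable R : realType.
Variables (U X X0 : pspace R) (A : X -> X) (B : U -> X) (A0 : X0 -> X0) (B0 : U -> X0).
Variables (K K0 d : R).
Hypotheses (hA : bounded_op A) (hB : bounded_op B) (Kpos : 0 < K)
  (hAK : forall x, jnorm2 (A x) <= K * jnorm2 x)
  (hdK : forall t : R, `|t| < d -> t ^+ 2 * K <= 1 / 16).
Hypotheses (hA0 : bounded_op A0) (hB0 : bounded_op B0) (K0pos : 0 < K0)
  (hA0K0 : forall x, jnorm2 (A0 x) <= K0 * jnorm2 x)
  (hdK0 : forall t : R, `|t| < d -> t ^+ 2 * K0 <= 1 / 16) (dpos : 0 < d).

Definition gram_agree j k := forall u v (s t : R), `|s| < d -> `|t| < d ->
  resolvent_gram A B j k s t u v = resolvent_gram A0 B0 j k s t u v.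

Lemma abs0_lt_d : `|0 : R| < d. Proof. by rewrite normr0. Qed.



Lemma gram_agree00_of_adj_eq :
  (forall s t : R, `|s| < d -> `|t| < d -> forall u,
     adj B (opinv (IminusZ s%:C (adj A)) (opinv (IminusZ t%:C A) (B u)))
     = adj B0 (opinv (IminusZ s%:C (adj A0)) (opinv (IminusZ t%:C A0) (B0 u)))) ->
  gram_agree 0 0.
Proof.
move=> h u v s t hs ht; rewrite /resolvent_gram /=.
rewrite -(ip_adj_resolvent hA hB Kpos hAK hdK t u v hs).
by rewrite -(ip_adj_resolvent hA0 hB0 K0pos hA0K0 hdK0 t u v hs) h.
Qed.

(* Dividing the expansion [psi_k(s, t) = psi_k(s, 0) + t psi_{k+1}(s, t)] by
   [t != 0] transfers agreement from [k] to [k + 1]; at [t = 0] the two sides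
   differ by [tau] times a bounded quantity for every small [tau > 0]. *)
Lemma gram_agree_succ j k : gram_agree j k -> gram_agree j k.+1.
Proof.
move=> h u v s t hs ht.
have ex := resolvent_gram_expand B hA Kpos hAK hdK.
have ex0 := resolvent_gram_expand B0 hA0 K0pos hA0K0 hdK0.
have off0 tau : `|tau| < d -> tau != 0 ->
    resolvent_gram A B j k.+1 s tau u v = resolvent_gram A0 B0 j k.+1 s tau u v.
  move=> htau nz; have := h u v s tau hs htau.
  rewrite (ex j k s tau u v htau) (ex0 j k s tau u v htau) (h u v s 0 hs abs0_lt_d).
  by move/addrI/mulfI; apply; rewrite eq_complex /= eqxx andbT.
have [->|nz] := eqVneq t 0; last exact: off0.
apply/eqP; rewrite -subr_eq0; apply/eqP.
pose c := jnorm2 (iter j A (opinv (IminusZ s%:C A) (B v))) + K ^+ k.+2 * (4 * jnorm2 (B u)).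
pose c0 := jnorm2 (iter j A0 (opinv (IminusZ s%:C A0) (B0 v))) + K0 ^+ k.+2 * (4 * jnorm2 (B0 u)).
have c_ge0 : 0 <= c + c0.
  have p1 : 0 <= K ^+ k.+2 * (4 * jnorm2 (B u)).
    by rewrite mulr_ge0 ?exprn_ge0 ?mulr_ge0 ?jnorm2_ge0 // ltW.
  have p2 : 0 <= K0 ^+ k.+2 * (4 * jnorm2 (B0 u)).
    by rewrite mulr_ge0 ?exprn_ge0 ?mulr_ge0 ?jnorm2_ge0 // ltW.
  have := jnorm2_ge0 (iter j A (opinv (IminusZ s%:C A) (B v))).
  have := jnorm2_ge0 (iter j A0 (opinv (IminusZ s%:C A0) (B0 v))).
  by rewrite /c /c0; lra.
apply: (complex_eq0_of_small dpos c_ge0) => tau t0 td.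
have htau : `|tau| < d by rewrite gtr0_norm.
have [r1 i1] := resolvent_gram_parts_le B hA Kpos hAK hdK j k.+2 s u v htau.
have [r2 i2] := resolvent_gram_parts_le B0 hA0 K0pos hA0K0 hdK0 j k.+2 s u v htau.
have -> : resolvent_gram A B j k.+1 s 0 u v - resolvent_gram A0 B0 j k.+1 s 0 u v
    = tau%:C * (resolvent_gram A0 B0 j k.+2 s tau u v - resolvent_gram A B j k.+2 s tau u v).
  move: (off0 tau htau (lt0r_neq0 t0)).
  rewrite (ex j k.+1 s tau u v htau) (ex0 j k.+1 s tau u v htau).
  move: (resolvent_gram A B j k.+1 s 0 u v) (resolvent_gram A0 B0 j k.+1 s 0 u v) => g g0 e.
  have -> : g0 = g + tau%:C * resolvent_gram A B j k.+2 s tau u v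
                  - tau%:C * resolvent_gram A0 B0 j k.+2 s tau u v by rewrite e addrK.
  by ring.
rewrite ReMrl ImMrl ReB ImB !normrM gtr0_norm //.
by split; rewrite ler_pM2l //; apply: le_trans (ler_normB _ _) _; rewrite addrC; exact: lerD.
Qed.

Lemma gram_agree_sym j k : gram_agree j k -> gram_agree k j.
Proof.
move=> h u v s t hs ht; rewrite /resolvent_gram (pip_herm (iter k A _)) (pip_herm (iter k A0 _)).
by have := h v u t s ht hs; rewrite /resolvent_gram => ->.
Qed.

Lemma gram_agree_all : gram_agree 0 0 -> forall j k, gram_agree j k.
Proof.
move=> h0 j; elim: j => [|j ih] k; first by elim: k => [|k ihk] //; exact: gram_agree_succ.
by apply: gram_agree_sym; apply: gram_agree_succ; apply: gram_agree_sym.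
Qed.

Lemma moments_eq_of_gram_agree : gram_agree 0 0 -> forall j k u v,
  pip (iter j A (B v)) (iter k A (B u)) = pip (iter j A0 (B0 v)) (iter k A0 (B0 u)).
Proof.
move=> h0 j k u v; have := gram_agree_all h0 j k u v abs0_lt_d abs0_lt_d.
by rewrite /resolvent_gram !opinv_IminusZ0.
Qed.

End Moments.

Lemma moments_eq_of_adj_resolvent_eq (R : realType) (U X X0 : pspace R)
    (A : X -> X) (B : U -> X) (A0 : X0 -> X0) (B0 : U -> X0) :
  bounded_op A -> bounded_op B -> bounded_op A0 -> bounded_op B0 ->
  (exists r : R[i], 0 < r /\ forall z w : R[i], `|z| < r -> `|w| < r -> forall u : U,
     adj B (opinv (IminusZ (w^*)%C (adj A)) (opinv (IminusZ z A) (B u)))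
     = adj B0 (opinv (IminusZ (w^*)%C (adj A0)) (opinv (IminusZ z A0) (B0 u)))) ->
  forall j k u v,
    pip (iter j A (B v)) (iter k A (B u)) = pip (iter j A0 (B0 v)) (iter k A0 (B0 u)).
Proof.
move=> hA hB hA0 hB0 [r [r0 hr]].
have [K [Kpos hAK]] := bounded_jnorm2 hA.2.
have [K0 [K0pos hA0K0]] := bounded_jnorm2 hA0.2.
have [d1 [d1p hd1]] := exists_small_sqr_mul Kpos.
have [d2 [d2p hd2]] := exists_small_sqr_mul K0pos.
move: r0; rewrite ltcE /= => /andP[/eqP rim rre].
pose d := Num.min (Num.min d1 d2) (complex.Re r).
have dp : 0 < d by rewrite !lt_min d1p d2p rre.
have hdd t : `|t| < d -> [/\ `|t| < d1, `|t| < d2 & `|t| < complex.Re r].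
  by rewrite !lt_min => /andP[/andP[-> ->] ->].
have hdK t : `|t| < d -> t ^+ 2 * K <= 1 / 16 by case/hdd => /hd1.
have hdK0 t : `|t| < d -> t ^+ 2 * K0 <= 1 / 16 by case/hdd => _ /hd2.
apply: (moments_eq_of_gram_agree hA Kpos hAK hdK hA0 K0pos hA0K0 hdK0 dp).
apply: (gram_agree00_of_adj_eq hA hB Kpos hAK hdK hA0 hB0 K0pos hA0K0 hdK0) => s t hs ht u.
have hrr x : `|x| < d -> `|x%:C| < r.
  by case/hdd => _ _ h; rewrite normc_real ltcE /= rim eqxx.
by have := hr t%:C s%:C (hrr t ht) (hrr s hs) u; rewrite conjc_real.
Qed.

Lemma energy_ctrl_sum (R : realType) (U X : pspace R) (A : X -> X) (B : U -> X) n u :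
  energy (ctrl_sum A B n u) =
  \sum_(k < n.+1) \sum_(j < n.+1) pip (iter k A (B (u k))) (iter j A (B (u j))).
Proof. by rewrite /energy /ctrl_sum ip_suml; apply: eq_bigr => k _; exact: ip_sumr. Qed.

Unset Implicit Arguments.
Set Strict Implicit.
Theorem mainTheorem11 (R : realType) (U Y X0 X : pspace R) (kappa : nat)
  (theta : R[i] -> U -> Y)
  (A0 : X0 -> X0) (B0 : U -> X0) (C0 : X0 -> Y)
  (A : X -> X) (B : U -> X) (Cc : X -> Y) (D : U -> Y) :
  in_Skappa kappa theta ->
  optimal A0 B0 C0 D kappa theta ->
  kadmissible A B Cc D kappa theta ->
  (exists r : R[i], 0 < r /\ forall z w : R[i], `|z| < r -> `|w| < r ->
     forall u : U,
       adj B (opinv (IminusZ (w^*)%C (adj A)) (opinv (IminusZ z A) (B u)))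
       = adj B0 (opinv (IminusZ (w^*)%C (adj A0)) (opinv (IminusZ z A0) (B0 u)))) ->
  optimal A B Cc D kappa theta.
Proof.
move=> _ [hadm0 hopt] hadm hgram.
have [[[hA0 hB0 _ _ _] _] _ _] := hadm0.
have [[[hA hB _ _ _] _] _ _] := hadm.
have hmom := moments_eq_of_adj_resolvent_eq hA hB hA0 hB0 hgram.
split=> // X' A' B' C' hadm' n u.
have -> : energy (ctrl_sum A B n u) = energy (ctrl_sum A0 B0 n u).
  by rewrite !energy_ctrl_sum; apply: eq_bigr => k _; apply: eq_bigr => j _; exact: hmom.
exact: hopt _ _ _ _ hadm' n u.
Qed.
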